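(* Let $f\in\mathcal{F}_k$. For any $u\in\mathbb{R}^k$, we have $L^f(\boxed{u},y)\le L^f(u,y)$ for all $y\in\mathcal{Y}$.
   Context: $[k]=\{1,\dots,k\}$, $\mathcal{Y}=\{-1,1\}^k$; $u\odot u'$ entrywise product, $|u|$ entrywise absolute value, $\mathbbm{1}$ all-ones, $(x)_+$ entrywise positive part; $\boxed{u}=\mathrm{sign}(u)\odot\min(|u|,\mathbbm{1})$ (clipping to $[-1,1]^k$). $\mathcal{F}_k$: set functions $f:2^{[k]}\to\mathbb{R}$ that are submodular, increasing ($f(S\cup T)\ge f(S)$ for disjoint $S,T$) and normalized. Lovász extension $F(x)=\max_\pi\sum_{i=1}^kx_{\pi_i}(f(\{\pi_1,..,\pi_i\})-f(\{\pi_1,..,\pi_{i-1}\}))$ for $x\in\mathbb{R}^k_+$; Lovász hinge $L^f(u,y)=F((\mathbbm{1}-u\odot y)_+)$. *)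

From mathcomp Require Import all_boot all_order all_algebra.
From mathcomp Require Import perm.
Set Implicit Arguments. Unset Strict Implicit. Unset Printing Implicit Defensive.
Import Order.TTheory GRing.Theory Num.Theory.
Local Open Scope ring_scope.

Definition is_label (R : realFieldType) (k : nat) (y : 'I_k -> R) : Prop :=
  forall i, y i = 1 \/ y i = -1.

(* F_k: submodular, increasing (on disjoint unions), normalized set functions *)
Definition submodular (R : realFieldType) (k : nat) (f : {set 'I_k} -> R) : Prop :=
  forall A B : {set 'I_k}, f (A :|: B) + f (A :&: B) <= f A + f B.

Definition increasing_sf (R : realFieldType) (k : nat) (f : {set 'I_k} -> R) : Prop :=
  forall S T : {set 'I_k}, [disjoint S & T] -> f S <= f (S :|: T).

Definition normalized_sf (R : realFieldType) (k : nat) (f : {set 'I_k} -> R) : Prop :=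
  f set0 = 0.

Definition in_Fk (R : realFieldType) (k : nat) (f : {set 'I_k} -> R) : Prop :=
  [/\ submodular f, increasing_sf f & normalized_sf f].

(* {pi_1, ..., pi_m} for a permutation pi (0-based: pi 0, ..., pi (m-1)) *)
Definition prefix_set (k : nat) (s : {perm 'I_k}) (m : nat) : {set 'I_k} :=
  [set s j | j : 'I_k & (j < m)%N].

Definition lovasz_term (R : realFieldType) (k : nat) (f : {set 'I_k} -> R)
  (x : 'I_k -> R) (s : {perm 'I_k}) : R :=
  \sum_(i < k) x (s i) * (f (prefix_set s i.+1) - f (prefix_set s i)).

(* Lovasz extension: maximum over all permutations (the set of permutations is
   nonempty; the identity term is used as seed, which is harmless for max). *)
Definition lovasz_ext (R : realFieldType) (k : nat) (f : {set 'I_k} -> R)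
  (x : 'I_k -> R) : R :=
  \big[Num.max/lovasz_term f x 1%g]_(s : {perm 'I_k}) lovasz_term f x s.

Definition pos_part (R : realFieldType) (k : nat) (x : 'I_k -> R) : 'I_k -> R :=
  fun i => Num.max (x i) 0.

Definition lovasz_hinge (R : realFieldType) (k : nat) (f : {set 'I_k} -> R)
  (u y : 'I_k -> R) : R :=
  lovasz_ext f (pos_part (fun i => 1 - u i * y i)).

Definition clip (R : realFieldType) (k : nat) (u : 'I_k -> R) : 'I_k -> R :=
  fun i => Num.sg (u i) * Num.min `|u i| 1.

From mathcomp Require Import all_boot all_order all_algebra.
From mathcomp Require Import perm.
From mathcomp Require Import lra.
Import Order.TTheory GRing.Theory Num.Theory.
Local Open Scope ring_scope.

(* For an increasing f every term of the Lovász extension has a nonnegative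
   coefficient, so F is monotone on R^k. Clipping u only moves each margin
   u_i y_i towards [-1, 1], which never increases (1 - u_i y_i)_+, hence
   F((1 - clip(u) y)_+) <= F((1 - u y)_+). *)

Lemma prefix_setS (k : nat) (s : {perm 'I_k}) (i : 'I_k) :
  prefix_set s i.+1 = prefix_set s i :|: [set s i].
Proof.
apply/setP => x; rewrite !inE; apply/imsetP/orP.
- case=> j; rewrite inE ltnS leq_eqVlt => /orP[/eqP ji|ji] ->.
    by right; apply/eqP; congr (s _); apply/val_inj.
  by left; apply/imsetP; exists j; rewrite ?inE.
- case=> [/imsetP[j]|/eqP ->].
    by rewrite inE => ji ->; exists j; rewrite // inE ltnS ltnW.
  by exists i; rewrite // inE ltnS.
Qed.

Lemma prefix_increment_ge0 (R : realFieldType) (k : nat) (f : {set 'I_k} -> R)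
  (f_incr : increasing_sf f) (s : {perm 'I_k}) (i : 'I_k) :
  0 <= f (prefix_set s i.+1) - f (prefix_set s i).
Proof.
rewrite subr_ge0 prefix_setS; apply: f_incr.
rewrite disjoint_sym disjoints1; apply/imsetP => -[j].
by rewrite inE => ji /perm_inj ij; rewrite ij ltnn in ji.
Qed.

Lemma le_lovasz_term (R : realFieldType) (k : nat) (f : {set 'I_k} -> R)
  (f_incr : increasing_sf f) (x x' : 'I_k -> R) (s : {perm 'I_k}) :
  (forall i, x i <= x' i) -> lovasz_term f x s <= lovasz_term f x' s.
Proof.
move=> le_xx'; apply: ler_sum => i _.
by apply: ler_wpM2r; [exact: prefix_increment_ge0 | exact: le_xx'].
Qed.

Lemma le_lovasz_ext (R : realFieldType) (k : nat) (f : {set 'I_k} -> R)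
  (f_incr : increasing_sf f) (x x' : 'I_k -> R) :
  (forall i, x i <= x' i) -> lovasz_ext f x <= lovasz_ext f x'.
Proof.
move=> le_xx'; apply: (big_ind2 (fun a b => a <= b)) => [||s _].
- exact: le_lovasz_term.
- by move=> a b c d; apply: le_max2.
- exact: le_lovasz_term.
Qed.

Lemma hinge_clip_le (R : realFieldType) (u y : R) : y = 1 \/ y = -1 ->
  Num.max (1 - Num.sg u * Num.min `|u| 1 * y) 0 <= Num.max (1 - u * y) 0.
Proof.
move=> y_label; rewrite ge_max !le_max lexx orbT andbT.
case: (ltrgtP u 0) => [u_lt0|u_gt0|->]; last by rewrite sgr0 !mul0r lexx.
- rewrite ltr0_sg // ltr0_norm //.
  by case: (leP (- u) 1); case: y_label => -> ?; apply/orP; lra.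
- rewrite gtr0_sg // gtr0_norm //.
  by case: (leP u 1); case: y_label => -> ?; apply/orP; lra.
Qed.

Theorem lemma2 (R : realFieldType) (k : nat) (f : {set 'I_k} -> R)
  (hf : in_Fk f) (u y : 'I_k -> R) (hy : is_label y) :
  lovasz_hinge f (clip u) y <= lovasz_hinge f u y.
Proof.
case: hf => _ f_incr _.
by apply: le_lovasz_ext => // i; apply: hinge_clip_le.
Qed.
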